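(* The set $\overline{P_2}$ of reduced words over $\{a,b,a^{-1},b^{-1}\}$ representing primitive elements of $F_2$ is not a context-free language.
   Context: $F_2$ is the free group on $\{a,b\}$; an element is primitive if it belongs to some basis of $F_2$. A word is reduced if it has no factor $xx^{-1}$ with $x\in\{a,b,a^{-1},b^{-1}\}$. *)

From Stdlib Require Import List Relations.
Import ListNotations.

Inductive letter : Type := La | Lb | LA | LB.  (* LA = a^-1, LB = b^-1 *)

Definition inv (x : letter) : letter :=
  match x with La => LA | LA => La | Lb => LB | LB => Lb end.

Definition letter_eqb (x y : letter) : bool :=
  match x, y with
  | La, La | Lb, Lb | LA, LA | LB, LB => true
  | _, _ => false
  end.

Definition word := list letter.

Fixpoint reduced (w : word) : Prop :=
  match w with
  | x :: ((y :: _) as t) => y <> inv x /\ reduced t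
  | _ => True
  end.

(* free reduction, using a reversed stack *)
Definition push (s : word) (x : letter) : word :=
  match s with
  | y :: t => if letter_eqb y (inv x) then t else x :: s
  | [] => [x]
  end.

Definition freered (w : word) : word := rev (fold_left push w []).

Definition winv (u : word) : word := rev (map inv u).

Definition subst2 (u v w : word) : word :=
  freered (flat_map (fun x => match x with
                              | La => u | LA => winv u
                              | Lb => v | LB => winv v end) w).

(* {u, v} is a basis of F_2: u, v are reduced words and the homomorphism
   F_2 -> F_2, a |-> u, b |-> v is bijective (an automorphism). *)
Definition is_basis2 (u v : word) : Prop :=
  reduced u /\ reduced v /\
  (forall w1 w2, reduced w1 -> reduced w2 -> subst2 u v w1 = subst2 u v w2 -> w1 = w2) /\
  (forall r, reduced r -> exists w, reduced w /\ subst2 u v w = r).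

Definition primitive (w : word) : Prop := exists v, is_basis2 w v.

Definition P2bar (w : word) : Prop := reduced w /\ primitive w.

Definition symbol (T : Type) := (nat + T)%type.

Definition cfg_step {T : Type} (rules : list (nat * list (symbol T)))
    (s1 s2 : list (symbol T)) : Prop :=
  exists u v X rhs, In (X, rhs) rules /\
    s1 = u ++ inl X :: v /\ s2 = u ++ rhs ++ v.

Definition cfg_generates {T : Type} (rules : list (nat * list (symbol T)))
    (start : nat) (w : list T) : Prop :=
  clos_refl_trans _ (cfg_step rules) [inl start] (map inr w).

Definition context_free {T : Type} (L : list T -> Prop) : Prop :=
  exists (rules : list (nat * list (symbol T))) (start : nat),
    forall w, L w <-> cfg_generates rules start w.

(* A basis (u, v) of F_2 abelianizes to an integer matrix with integer inverse,
   so the exponent sums of a primitive element in a and in b are coprime.  The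
   words (a b^n)^M b are primitive, with exponent sums (M, M n + 1).  Take n one
   more than the pumping constant p of a hypothetical grammar and M = (p+1)!.
   The pumped factor v x y is shorter than the gap between two a's, so pumping
   shifts the exponent sums by (i-1)(d_a, d_b) with d_a in {0, 1} and
   1 <= d_a + d_b <= p; a suitable i then gives a common divisor >= 2. *)

From Stdlib Require Import List Relations ZArith Lia Arith.
Import ListNotations.

Definition lpow {A : Type} (v : list A) (i : nat) : list A := concat (repeat v i).

Lemma lpow_succ_r {A : Type} (v : list A) i : lpow v (S i) = lpow v i ++ v.
Proof.
  unfold lpow. rewrite <- Nat.add_1_r, repeat_app, concat_app. simpl.
  now rewrite app_nil_r.
Qed.

Lemma length_lpow {A : Type} (v : list A) i : length (lpow v i) = i * length v.
Proof. unfold lpow. induction i; simpl; [reflexivity|]. rewrite length_app, IHi. lia. Qed.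

Lemma flat_map_repeat {A B : Type} (g : A -> list B) x k :
  flat_map g (repeat x k) = lpow (g x) k.
Proof. unfold lpow. induction k; simpl; now f_equal. Qed.

Lemma lpow_single {A : Type} (x : A) k : lpow [x] k = repeat x k.
Proof. unfold lpow. induction k; simpl; now f_equal. Qed.

(** * Free reduction and bases of [F_2] *)

Lemma inv_involutive x : inv (inv x) = x.
Proof. now destruct x. Qed.

Lemma letter_eqb_eq x y : letter_eqb x y = true -> x = y.
Proof. destruct x, y; simpl; congruence. Qed.

Lemma letter_eqb_refl x : letter_eqb x x = true.
Proof. now destruct x. Qed.

Lemma winv_cons x w : winv (x :: w) = winv w ++ [inv x].
Proof. reflexivity. Qed.

Lemma winv_app u v : winv (u ++ v) = winv v ++ winv u.
Proof. unfold winv. now rewrite map_app, rev_app_distr. Qed.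

Lemma winv_involutive w : winv (winv w) = w.
Proof.
  unfold winv. rewrite map_rev, rev_involutive, map_map.
  rewrite (map_ext _ id) by apply inv_involutive. apply map_id.
Qed.

Lemma winv_repeat x k : winv (repeat x k) = repeat (inv x) k.
Proof. unfold winv. now rewrite map_repeat, rev_repeat. Qed.

Definition push_word (w s : word) : word := fold_left push w s.

Lemma push_word_app u v s : push_word (u ++ v) s = push_word v (push_word u s).
Proof. apply fold_left_app. Qed.

Lemma freered_push_word w : freered w = rev (push_word w []).
Proof. reflexivity. Qed.

Lemma reduced_tail x w : reduced (x :: w) -> reduced w.
Proof. destruct w; simpl; tauto. Qed.

Lemma reduced_iff w :
  reduced w <-> forall p q x y, w = p ++ x :: y :: q -> y <> inv x.
Proof.
  induction w as [|z w IH]; split.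
  - intros _ [|] q x y E; discriminate.
  - now intros.
  - intros H [|z' p] q x y E; simpl in E; injection E as <- E.
    + subst w. apply H.
    + apply IH in E; [exact E | exact (reduced_tail _ _ H)].
  - intros H. destruct w as [|y q]; [exact I|]. split.
    + now apply (H [] q).
    + apply IH. intros p q' x y' E. apply (H (z :: p) q'). now rewrite E.
Qed.

Lemma reduced_rev w : reduced w -> reduced (rev w).
Proof.
  rewrite !reduced_iff. intros H p q x y E.
  assert (E' : w = rev q ++ y :: x :: rev p).
  { rewrite <- (rev_involutive w), E, rev_app_distr. simpl.
    now rewrite <- !app_assoc. }
  intros C. apply (H _ _ _ _ E'). now rewrite C, inv_involutive.
Qed.

Lemma push_reduced s x : reduced s -> reduced (push s x).
Proof.
  destruct s as [|y t]; simpl; intros H; [exact I|].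
  destruct (letter_eqb y (inv x)) eqn:E.
  - exact (reduced_tail _ _ H).
  - split; [|exact H]. intros ->. now rewrite letter_eqb_refl in E.
Qed.

Lemma push_word_reduced w s : reduced s -> reduced (push_word w s).
Proof.
  revert s; induction w as [|x w IH]; intros s H; [exact H|].
  apply IH, push_reduced, H.
Qed.

Lemma freered_reduced w : reduced (freered w).
Proof. apply reduced_rev, push_word_reduced. exact I. Qed.

Lemma push_push_inv s x : reduced s -> push (push s x) (inv x) = s.
Proof.
  intros H. destruct s as [|y t]; simpl.
  - now rewrite inv_involutive, letter_eqb_refl.
  - destruct (letter_eqb y (inv x)) eqn:E; simpl.
    + apply letter_eqb_eq in E. subst y. destruct t as [|y' t]; [reflexivity|].
      simpl. rewrite inv_involutive.
      destruct (letter_eqb y' x) eqn:E'; [|reflexivity].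
      apply letter_eqb_eq in E'. subst y'. destruct H as [H _].
      now rewrite inv_involutive in H.
    + now rewrite inv_involutive, letter_eqb_refl.
Qed.

Lemma push_word_winv w s : reduced s -> push_word (winv w) (push_word w s) = s.
Proof.
  revert s; induction w as [|x w IH]; intros s H; [reflexivity|].
  rewrite winv_cons, push_word_app. cbn [push_word fold_left].
  fold (push_word w (push s x)). rewrite IH by now apply push_reduced.
  now apply push_push_inv.
Qed.

Lemma push_word_winv_r w s : reduced s -> push_word w (push_word (winv w) s) = s.
Proof. intros H. rewrite <- (winv_involutive w) at 1. now apply push_word_winv. Qed.

Lemma push_word_reduced_id w s :
  reduced (rev s ++ w) -> push_word w s = rev w ++ s.
Proof.
  revert s; induction w as [|x w IH]; intros s H; [reflexivity|].
  cbn [push_word fold_left]. fold (push_word w (push s x)).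
  assert (Hx : push s x = x :: s).
  { destruct s as [|y t]; [reflexivity|]. simpl.
    destruct (letter_eqb y (inv x)) eqn:E; [|reflexivity].
    apply letter_eqb_eq in E. exfalso.
    apply reduced_iff with (p := rev t) (q := w) (x := y) (y := x) in H.
    - apply H. now rewrite E, inv_involutive.
    - simpl. now rewrite <- app_assoc. }
  rewrite Hx, IH; simpl; rewrite <- app_assoc; [reflexivity | exact H].
Qed.

Lemma freered_id w : reduced w -> freered w = w.
Proof.
  intros H. rewrite freered_push_word, push_word_reduced_id by exact H.
  now rewrite app_nil_r, rev_involutive.
Qed.

Lemma push_word_freered w s : reduced s -> push_word (freered w) s = push_word w s.
Proof.
  intros Hs. rewrite freered_push_word.
  induction w as [|x w IH] using rev_ind; [reflexivity|].
  rewrite !push_word_app. simpl.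
  destruct (push_word w []) as [|y t] eqn:E; simpl.
  - now rewrite <- IH.
  - destruct (letter_eqb y (inv x)) eqn:E'.
    + apply letter_eqb_eq in E'. subst y. simpl in IH.
      rewrite push_word_app in IH. simpl in IH. rewrite <- IH.
      pose proof (push_push_inv _ (inv x) (push_word_reduced (rev t) _ Hs)) as P.
      now rewrite inv_involutive in P.
    + simpl. rewrite push_word_app. simpl. now rewrite <- IH.
Qed.

Lemma freered_cancel_r u p : freered (u ++ p ++ winv p) = freered u.
Proof.
  rewrite !freered_push_word, !push_word_app, push_word_winv; [reflexivity|].
  apply push_word_reduced. exact I.
Qed.

Lemma freered_cancel_l p u : freered (p ++ winv p ++ u) = freered u.
Proof.
  rewrite !freered_push_word, !push_word_app, push_word_winv; [reflexivity | exact I].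
Qed.

Definition img (u v : word) (x : letter) : word :=
  match x with La => u | LA => winv u | Lb => v | LB => winv v end.

Lemma subst2_img u v w : subst2 u v w = freered (flat_map (img u v) w).
Proof. reflexivity. Qed.

Lemma img_inv u v x : img u v (inv x) = winv (img u v x).
Proof. destruct x; simpl; now rewrite ?winv_involutive. Qed.

Lemma flat_map_img_winv u v w :
  flat_map (img u v) (winv w) = winv (flat_map (img u v) w).
Proof.
  induction w as [|x w IH]; [reflexivity|].
  rewrite winv_cons, flat_map_app, IH. simpl.
  now rewrite app_nil_r, img_inv, winv_app.
Qed.

(* Substitution is compatible with free reduction: cancelling a pair [x x^-1]
   cancels the images [img x (img x)^-1]. *)
Lemma push_word_img_freered u v w s : reduced s ->
  push_word (flat_map (img u v) (freered w)) s = push_word (flat_map (img u v) w) s.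
Proof.
  intros Hs.
  assert (G : forall st, reduced st -> forall s, reduced s ->
    push_word (flat_map (img u v) (rev st ++ w)) s =
    push_word (flat_map (img u v) (rev (push_word w st))) s).
  { clear s Hs. induction w as [|x w IH]; intros st Hst s Hs.
    - now rewrite app_nil_r.
    - cbn [push_word fold_left]. fold (push_word w (push st x)).
      rewrite <- IH by first [exact Hs | now apply push_reduced].
      destruct st as [|y t]; simpl; [reflexivity|].
      destruct (letter_eqb y (inv x)) eqn:E; simpl.
      + apply letter_eqb_eq in E. subst y.
        replace ((rev t ++ [inv x]) ++ x :: w) with (rev t ++ [inv x; x] ++ w)
          by now rewrite <- app_assoc.
        rewrite !flat_map_app, !push_word_app. f_equal.
        simpl. rewrite !app_nil_r, push_word_app, img_inv.
        now apply push_word_winv_r, push_word_reduced.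
      + now rewrite <- !app_assoc. }
  symmetry. exact (G [] I s Hs).
Qed.

Lemma push_word_winv_freered p s : reduced s ->
  push_word (winv (freered p)) s = push_word (winv p) s.
Proof.
  intros Hs.
  transitivity (push_word (winv (freered p))
                  (push_word (freered p) (push_word (winv p) s))).
  - rewrite push_word_freered by now apply push_word_reduced.
    now rewrite push_word_winv_r.
  - now apply push_word_winv, push_word_reduced.
Qed.

Lemma subst2_comp u v u' v' w :
  subst2 u v (subst2 u' v' w) = subst2 (subst2 u v u') (subst2 u v v') w.
Proof.
  rewrite (subst2_img u v), (subst2_img (subst2 u v u')), !freered_push_word.
  f_equal. rewrite subst2_img, push_word_img_freered by exact I.
  cut (reduced (@nil letter)); [|exact I]. generalize (@nil letter).
  induction w as [|x w IH]; intros s Hs; [reflexivity|].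
  simpl. rewrite flat_map_app, !push_word_app, IH by now apply push_word_reduced.
  f_equal. rewrite !subst2_img.
  destruct x; simpl; rewrite ?push_word_freered, ?push_word_winv_freered,
    ?flat_map_img_winv; auto.
Qed.

Lemma subst2_id w : reduced w -> subst2 [La] [Lb] w = w.
Proof.
  intros H. rewrite subst2_img.
  replace (flat_map (img [La] [Lb]) w) with w by
    (clear H; induction w as [|[] w IH]; simpl; now f_equal).
  now apply freered_id.
Qed.

Lemma basis_of_inverse u v u' v' : reduced u -> reduced v ->
  subst2 u' v' u = [La] -> subst2 u' v' v = [Lb] ->
  subst2 u v u' = [La] -> subst2 u v v' = [Lb] -> is_basis2 u v.
Proof.
  intros Hu Hv E1 E2 E3 E4. repeat split; auto.
  - intros w1 w2 H1 H2 E.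
    rewrite <- (subst2_id w1 H1), <- (subst2_id w2 H2), <- E1, <- E2, <- !subst2_comp.
    now rewrite E.
  - intros r Hr. exists (subst2 u' v' r). split; [apply freered_reduced|].
    rewrite subst2_comp, E3, E4. now apply subst2_id.
Qed.

Lemma basis_comp u1 v1 u2 v2 : is_basis2 u1 v1 -> is_basis2 u2 v2 ->
  is_basis2 (subst2 u1 v1 u2) (subst2 u1 v1 v2).
Proof.
  intros (_ & _ & I1 & S1) (_ & _ & I2 & S2).
  repeat split; try apply freered_reduced.
  - intros w1 w2 H1 H2 E. rewrite <- !subst2_comp in E.
    apply I2, I1; auto; apply freered_reduced.
  - intros r Hr. destruct (S1 r Hr) as (w1 & Hw1 & E1).
    destruct (S2 w1 Hw1) as (w & Hw & E). exists w. split; [exact Hw|].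
    now rewrite <- subst2_comp, E.
Qed.

(** * Exponent sums *)

Fixpoint weight (f : letter -> Z) (w : word) : Z :=
  match w with [] => 0 | x :: t => f x + weight f t end%Z.

Definition ea (x : letter) : Z := match x with La => 1 | LA => -1 | _ => 0 end%Z.
Definition eb (x : letter) : Z := match x with Lb => 1 | LB => -1 | _ => 0 end%Z.

Definition odd_weight (f : letter -> Z) : Prop := forall x, f (inv x) = (- f x)%Z.

Lemma ea_odd : odd_weight ea. Proof. now intros []. Qed.
Lemma eb_odd : odd_weight eb. Proof. now intros []. Qed.

Lemma weight_app f u v : weight f (u ++ v) = (weight f u + weight f v)%Z.
Proof. induction u; simpl; lia. Qed.

Lemma weight_rev f w : weight f (rev w) = weight f w.
Proof. induction w; simpl; rewrite ?weight_app; simpl; lia. Qed.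

Lemma weight_lpow f v i : weight f (lpow v i) = (Z.of_nat i * weight f v)%Z.
Proof.
  unfold lpow. induction i; cbn [repeat concat]; [reflexivity|].
  rewrite weight_app, IHi, Nat2Z.inj_succ. ring.
Qed.

Lemma weight_pumped f u v x y z i :
  weight f (u ++ lpow v i ++ x ++ lpow y i ++ z) =
  (weight f (u ++ v ++ x ++ y ++ z) + (Z.of_nat i - 1) * (weight f v + weight f y))%Z.
Proof. rewrite !weight_app, !weight_lpow. ring. Qed.

Section OddWeight.
Variable f : letter -> Z.
Hypothesis f_odd : odd_weight f.

Lemma weight_push s x : weight f (push s x) = (weight f s + f x)%Z.
Proof.
  destruct s as [|y t]; simpl; [lia|].
  destruct (letter_eqb y (inv x)) eqn:E; simpl; [|lia].
  apply letter_eqb_eq in E. subst y. rewrite f_odd. lia.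
Qed.

Lemma weight_push_word w s : weight f (push_word w s) = (weight f s + weight f w)%Z.
Proof.
  revert s; induction w as [|x w IH]; intros s; simpl; [lia|].
  fold (push_word w (push s x)). rewrite IH, weight_push. lia.
Qed.

Lemma weight_freered w : weight f (freered w) = weight f w.
Proof. now rewrite freered_push_word, weight_rev, weight_push_word. Qed.

Lemma weight_winv w : weight f (winv w) = (- weight f w)%Z.
Proof.
  unfold winv. rewrite weight_rev. induction w; simpl; [reflexivity|].
  rewrite f_odd. lia.
Qed.

Lemma weight_subst2 u v w :
  weight f (subst2 u v w) = (weight ea w * weight f u + weight eb w * weight f v)%Z.
Proof.
  rewrite subst2_img, weight_freered.
  induction w as [|x w IH]; simpl; [reflexivity|].
  rewrite weight_app, IH. destruct x; cbn [img ea eb]; rewrite ?weight_winv; ring.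
Qed.

End OddWeight.

(* Abelianizing, a basis [u, v] gives a 2x2 integer matrix
   [[ea u, eb u], [ea v, eb v]] with an integer inverse, hence determinant +-1. *)
Lemma basis_exponents_coprime u v d :
  is_basis2 u v -> (d | weight ea u)%Z -> (d | weight eb u)%Z -> (d | 1)%Z.
Proof.
  intros (_ & _ & _ & Hsurj) Da Db.
  destruct (Hsurj [La] I) as (w1 & _ & E1).
  destruct (Hsurj [Lb] I) as (w2 & _ & E2).
  pose proof (f_equal (weight ea) E1) as A1. pose proof (f_equal (weight eb) E1) as B1.
  pose proof (f_equal (weight ea) E2) as A2. pose proof (f_equal (weight eb) E2) as B2.
  rewrite weight_subst2 in A1, B1, A2, B2 by (apply ea_odd || apply eb_odd).
  simpl in A1, B1, A2, B2.
  assert (Hdet : ((weight ea u * weight eb v - weight eb u * weight ea v) *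
                  (weight ea w1 * weight eb w2 - weight eb w1 * weight ea w2))%Z = 1%Z)
    by nia.
  rewrite <- Hdet. apply Z.divide_mul_l, Z.divide_sub_r; now apply Z.divide_mul_l.
Qed.

(** * The primitive witnesses [(a b^n)^M b] *)

Definition positive_word (w : word) : Prop := Forall (fun x => x = La \/ x = Lb) w.

Lemma positive_word_reduced w : positive_word w -> reduced w.
Proof.
  intros H. apply reduced_iff. intros p q x y ->.
  apply Forall_app in H as [_ H].
  inversion H as [|? ? Hx H']; inversion H' as [|? ? Hy _]; subst.
  destruct Hx as [-> | ->], Hy as [-> | ->]; discriminate.
Qed.

Lemma positive_word_repeat x k : x = La \/ x = Lb -> positive_word (repeat x k).
Proof. intros Hx. apply Forall_forall. intros y Hy. now apply repeat_spec in Hy as ->. Qed.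

Lemma positive_word_weights w : positive_word w ->
  (0 <= weight ea w)%Z /\ (0 <= weight eb w)%Z /\
  (weight ea w + weight eb w)%Z = Z.of_nat (length w).
Proof.
  induction 1 as [|x w Hx _ IH]; [simpl; lia|].
  cbn [weight length]. rewrite Nat2Z.inj_succ. destruct Hx as [-> | ->]; cbn [ea eb]; lia.
Qed.

(* The witness [(a b^n)^M b] is the image of the primitive [a^M b] under the
   automorphism [a |-> a b^n, b |-> b]. *)
Definition witness (n M : nat) : word := lpow (La :: repeat Lb n) M ++ [Lb].

Lemma positive_word_abn n : positive_word (La :: repeat Lb n).
Proof. constructor; [now left | now apply positive_word_repeat; right]. Qed.

Lemma positive_word_witness n M : positive_word (witness n M).
Proof.
  apply Forall_app. split; [|now repeat constructor; right].
  induction M as [|M IH]; [constructor|].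
  change (positive_word ((La :: repeat Lb n) ++ lpow (La :: repeat Lb n) M)).
  apply Forall_app. split; [apply positive_word_abn | exact IH].
Qed.

Lemma weight_witness n M : weight ea (witness n M) = Z.of_nat M /\
  weight eb (witness n M) = (Z.of_nat M * Z.of_nat n + 1)%Z.
Proof.
  unfold witness. rewrite !weight_app, !weight_lpow. cbn [weight ea eb].
  assert (Hb : forall k, weight ea (repeat Lb k) = 0%Z /\ weight eb (repeat Lb k) = Z.of_nat k).
  { induction k; cbn [repeat weight ea eb]; [now split|]. rewrite Nat2Z.inj_succ. lia. }
  destruct (Hb n) as [-> ->]. lia.
Qed.

Lemma length_witness n M : length (witness n M) = M * S n + 1.
Proof.
  unfold witness. rewrite length_app, length_lpow. simpl. now rewrite repeat_length.
Qed.

Lemma is_basis2_transvection n : is_basis2 (La :: repeat Lb n) [Lb].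
Proof.
  apply (basis_of_inverse _ _ (La :: repeat LB n) [Lb]);
    auto using positive_word_reduced, positive_word_abn; [exact I| |].
  all: rewrite subst2_img; cbn [flat_map img]; rewrite flat_map_repeat;
    cbn [img winv map rev app inv]; rewrite lpow_single.
  - replace (repeat Lb n) with (winv (repeat LB n)) by apply winv_repeat.
    exact (freered_cancel_r [La] (repeat LB n)).
  - replace (repeat LB n) with (winv (repeat Lb n)) by apply winv_repeat.
    exact (freered_cancel_r [La] (repeat Lb n)).
Qed.

Lemma is_basis2_power M : is_basis2 (repeat La M ++ [Lb]) [La].
Proof.
  assert (HM : positive_word (repeat La M ++ [Lb])).
  { apply Forall_app. split; [now apply positive_word_repeat; left|].
    now repeat constructor; right. }
  apply (basis_of_inverse _ _ [Lb] (repeat LB M ++ [La]));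
    auto using positive_word_reduced; [exact I| |].
  all: rewrite subst2_img, flat_map_app, flat_map_repeat;
    cbn [flat_map img winv map rev app]; rewrite lpow_single, app_nil_r.
  - replace (repeat LB M) with (winv (repeat Lb M)) by apply winv_repeat.
    exact (freered_cancel_l (repeat Lb M) [La]).
  - rewrite <- winv_repeat.
    pose proof (freered_cancel_l (winv (repeat La M)) [Lb]) as E.
    now rewrite winv_involutive in E.
Qed.

Lemma witness_primitive n M : primitive (witness n M).
Proof.
  exists (subst2 (La :: repeat Lb n) [Lb] [La]).
  replace (witness n M) with (subst2 (La :: repeat Lb n) [Lb] (repeat La M ++ [Lb])).
  - apply basis_comp; [apply is_basis2_transvection | apply is_basis2_power].
  - rewrite subst2_img, flat_map_app, flat_map_repeat.
    apply freered_id, positive_word_reduced, positive_word_witness.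
Qed.

Lemma witness_P2bar n M : P2bar (witness n M).
Proof.
  split; [apply positive_word_reduced, positive_word_witness | apply witness_primitive].
Qed.

(* [a_spaced n k w]: at least [k] letters precede the first [a] of [w], and
   any two consecutive [a]s are separated by at least [n] letters. *)
Fixpoint a_spaced (n k : nat) (w : word) : Prop :=
  match w with
  | [] => True
  | La :: t => k = 0 /\ a_spaced n n t
  | _ :: t => a_spaced n (pred k) t
  end.

Lemma a_spaced_app_inv n k u v :
  a_spaced n k (u ++ v) -> a_spaced n k u /\ exists k', a_spaced n k' v.
Proof.
  revert k; induction u as [|x u IH]; intros k H; [split; eauto; exact I|].
  destruct x; simpl in *; try (destruct H as [? H]); apply IH in H; tauto.
Qed.

Lemma a_spaced_repeat_b n k j w :
  a_spaced n (k - j) w -> a_spaced n k (repeat Lb j ++ w).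
Proof.
  revert k; induction j as [|j IH]; intros k H; simpl.
  - now rewrite Nat.sub_0_r in H.
  - apply IH. now replace (pred k - j) with (k - S j) by lia.
Qed.

Lemma a_spaced_witness n M : a_spaced n 0 (witness n M).
Proof.
  unfold witness. induction M as [|M IH]; simpl; [exact I|].
  split; [reflexivity|]. rewrite <- app_assoc.
  apply a_spaced_repeat_b. now rewrite Nat.sub_diag.
Qed.

Lemma a_spaced_no_a n k w :
  positive_word w -> a_spaced n k w -> length w <= k -> weight ea w = 0%Z.
Proof.
  intros Hw. revert k; induction Hw as [|x w Hx Hw IH]; intros k Hs Hl; [reflexivity|].
  destruct Hx as [-> | ->]; simpl in *; [lia|].
  apply (IH (pred k)); [exact Hs | lia].
Qed.

Lemma a_spaced_at_most_one_a n k w :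
  positive_word w -> a_spaced n k w -> length w <= S n -> (weight ea w <= 1)%Z.
Proof.
  intros Hw. revert k; induction Hw as [|x w Hx Hw IH]; intros k Hs Hl; simpl; [lia|].
  destruct Hx as [-> | ->]; simpl in *.
  - rewrite (a_spaced_no_a n n w); [lia | exact Hw | tauto | lia].
  - apply IH in Hs; lia.
Qed.

Lemma witness_factor_a_count n M u f v :
  witness n M = u ++ f ++ v -> length f <= S n -> (weight ea f <= 1)%Z.
Proof.
  intros E Hf.
  pose proof (a_spaced_witness n M) as Hs. pose proof (positive_word_witness n M) as Hp.
  rewrite E in Hs, Hp.
  apply a_spaced_app_inv in Hs as [_ [k Hs]]. apply a_spaced_app_inv in Hs as [Hs _].
  apply Forall_app in Hp as [_ Hp]. apply Forall_app in Hp as [Hp _].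
  exact (a_spaced_at_most_one_a n k f Hp Hs Hf).
Qed.

Lemma witness_pump_shift n M u v x y z :
  witness n M = u ++ v ++ x ++ y ++ z -> length (v ++ x ++ y) <= S n ->
  (0 <= weight ea v + weight ea y <= 1)%Z /\ (0 <= weight eb v + weight eb y)%Z /\
  (weight ea v + weight ea y + (weight eb v + weight eb y))%Z = Z.of_nat (length (v ++ y)).
Proof.
  intros E Hl.
  assert (Hone : (weight ea (v ++ x ++ y) <= 1)%Z).
  { apply (witness_factor_a_count n M u _ z); [|exact Hl]. now rewrite <- !app_assoc. }
  pose proof (positive_word_witness n M) as Hp. rewrite E in Hp.
  repeat (apply Forall_app in Hp as [? Hp]).
  destruct (positive_word_weights v) as (V1 & V2 & V3); [assumption|].
  destruct (positive_word_weights x) as (X1 & _); [assumption|].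
  destruct (positive_word_weights y) as (Y1 & Y2 & Y3); [assumption|].
  rewrite !weight_app in Hone. rewrite length_app, Nat2Z.inj_add. lia.
Qed.

(** * The pumping lemma *)

Section Grammar.
Variable T : Type.
Variable R : list (nat * list (symbol T)).

(* [derives s w k]: the sentential form [s] derives [w] using [k] rule
   applications; [k] is the measure for the well-founded inductions below. *)
Inductive derives : list (symbol T) -> list T -> nat -> Prop :=
| derives_nil : derives [] [] 0
| derives_term t s w k : derives s w k -> derives (inr t :: s) (t :: w) k
| derives_rule X rhs s w1 w2 k1 k2 : In (X, rhs) R -> derives rhs w1 k1 ->
    derives s w2 k2 -> derives (inl X :: s) (w1 ++ w2) (S (k1 + k2)).

Lemma derives_app s1 w1 k1 s2 w2 k2 : derives s1 w1 k1 -> derives s2 w2 k2 ->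
  derives (s1 ++ s2) (w1 ++ w2) (k1 + k2).
Proof.
  intros H1 H2. induction H1; simpl.
  - exact H2.
  - now constructor.
  - rewrite <- app_assoc. replace (S (k1 + k0 + k2)) with (S (k1 + (k0 + k2))) by lia.
    econstructor; eauto.
Qed.

Lemma derives_app_inv s1 s2 w k : derives (s1 ++ s2) w k ->
  exists w1 w2 k1 k2, w = w1 ++ w2 /\ k = k1 + k2 /\ derives s1 w1 k1 /\ derives s2 w2 k2.
Proof.
  revert w k; induction s1 as [|a s1 IH]; intros w k H.
  - exists [], w, 0, k. repeat split; auto. constructor.
  - inversion H; subst.
    + destruct (IH _ _ H4) as (w1 & w2 & k1 & k2 & -> & -> & D1 & D2).
      exists (t :: w1), w2, k1, k2. repeat split; auto. now constructor.
    + destruct (IH _ _ H6) as (w1' & w2' & k1' & k2' & -> & -> & D1 & D2).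
      exists (w1 ++ w1'), w2', (S (k1 + k1')), k2'. repeat split; auto.
      * now rewrite app_assoc.
      * lia.
      * econstructor; eauto.
Qed.

Lemma derives_nonterminal_inv X w k : derives [inl X] w k ->
  exists rhs k', In (X, rhs) R /\ derives rhs w k' /\ k = S k'.
Proof.
  intros H. inversion H; subst. inversion H6; subst.
  exists rhs, k1. now rewrite app_nil_r, Nat.add_0_r.
Qed.

Lemma derives_nonterminal X rhs w k : In (X, rhs) R -> derives rhs w k ->
  derives [inl X] w (S k).
Proof.
  intros HX Hd. rewrite <- (app_nil_r w), <- (Nat.add_0_r k).
  econstructor; eauto. constructor.
Qed.

Lemma derives_terminals w : derives (map inr w) w 0.
Proof. induction w; simpl; now constructor. Qed.

Lemma cfg_step_app s1 s2 p q : clos_refl_trans _ (cfg_step R) s1 s2 ->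
  clos_refl_trans _ (cfg_step R) (p ++ s1 ++ q) (p ++ s2 ++ q).
Proof.
  induction 1 as [s1 s2 (u & v & X & rhs & HX & -> & ->)| |];
    [|apply rt_refl | eauto using rt_trans].
  apply rt_step. exists (p ++ u), (v ++ q), X, rhs.
  split; [exact HX|]. now split; rewrite <- !app_assoc.
Qed.

Lemma derives_cfg_steps s w k : derives s w k ->
  clos_refl_trans _ (cfg_step R) s (map inr w).
Proof.
  induction 1 as [|t s w k _ IH|X rhs s w1 w2 k1 k2 HX _ IH1 _ IH2].
  - apply rt_refl.
  - pose proof (cfg_step_app _ _ [inr t] [] IH) as H.
    now rewrite !app_nil_r in H.
  - eapply rt_trans; [apply rt_step; exists [], s, X, rhs; now split|].
    rewrite map_app. eapply rt_trans.
    + exact (cfg_step_app _ _ [] s IH1).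
    + pose proof (cfg_step_app _ _ (map inr w1) [] IH2) as H.
      now rewrite !app_nil_r in H.
Qed.

Lemma cfg_steps_derives s1 s2 : clos_refl_trans _ (cfg_step R) s1 s2 ->
  forall w, (exists k, derives s2 w k) -> exists k, derives s1 w k.
Proof.
  induction 1 as [s1 s2 (u & v & X & rhs & HX & -> & ->)| |]; auto.
  intros w [k Hk].
  apply derives_app_inv in Hk as (w1 & w' & k1 & k' & -> & -> & D1 & D').
  apply derives_app_inv in D' as (w2 & w3 & k2 & k3 & -> & -> & D2 & D3).
  exists (k1 + S (k2 + k3)). apply derives_app; [exact D1|]. econstructor; eauto.
Qed.

Lemma cfg_generates_derives start w :
  cfg_generates R start w <-> exists k, derives [inl start] w k.
Proof.
  split.
  - intros H. eapply cfg_steps_derives; [exact H|]. exists 0. apply derives_terminals.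
  - intros [k H]. exact (derives_cfg_steps _ _ _ H).
Qed.

Definition embeds (s : list (symbol T)) (Y : nat) (u z : list T) (c : nat) : Prop :=
  forall w k, derives [inl Y] w k -> derives s (u ++ w ++ z) (c + k).

Lemma embeds_refl X : embeds [inl X] X [] [] 0.
Proof. intros w k H. now rewrite app_nil_r. Qed.

Lemma embeds_trans s Y Z u z c u' z' c' :
  embeds s Y u z c -> embeds [inl Y] Z u' z' c' ->
  embeds s Z (u ++ u') (z' ++ z) (c + c').
Proof.
  intros H1 H2 w k H. rewrite <- Nat.add_assoc.
  replace ((u ++ u') ++ w ++ z' ++ z) with (u ++ (u' ++ w ++ z') ++ z)
    by now rewrite <- !app_assoc.
  now apply H1, H2.
Qed.

Lemma embeds_pump X v y c x k : embeds [inl X] X v y c -> derives [inl X] x k ->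
  forall i, derives [inl X] (lpow v i ++ x ++ lpow y i) (i * c + k).
Proof.
  intros Hc Hx i. induction i as [|i IH]; simpl.
  - now rewrite app_nil_r.
  - apply Hc in IH. rewrite (lpow_succ_r y). change (lpow v (S i)) with (v ++ lpow v i).
    replace (c + i * c + k) with (c + (i * c + k)) by lia.
    now rewrite <- !app_assoc in *.
Qed.

Definition branching : nat := S (list_max (map (fun r => length (snd r)) R)).

Lemma length_rhs_le X rhs : In (X, rhs) R -> length rhs <= branching.
Proof.
  intros HX. unfold branching.
  assert (Hmax := le_n (list_max (map (fun r => length (snd r)) R))).
  apply list_max_le, Forall_forall with (x := length rhs) in Hmax; [lia|].
  apply in_map_iff. now exists (X, rhs).
Qed.

Lemma heavy_nonterminal B s w k : 1 <= B -> derives s w k -> length s * B < length w ->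
  exists Y u w' z c k', embeds s Y u z c /\ derives [inl Y] w' k' /\ k = c + k' /\
    w = u ++ w' ++ z /\ B < length w'.
Proof.
  intros HB. induction 1 as [|t s w k Hd IH|X rhs s w1 w2 k1 k2 HX D1 _ D2 IH];
    simpl; intros Hl; [lia| |].
  - destruct IH as (Y & u & w' & z & c & k' & Hc & Hd' & -> & -> & Hw'); [nia|].
    exists Y, (t :: u), w', z, c, k'. repeat split; auto.
    intros w'' k'' H. now constructor; apply Hc.
  - rewrite length_app in Hl. destruct (Nat.lt_ge_cases B (length w1)) as [Hb|Hb].
    + exists X, [], w1, w2, k2, (S k1). repeat split; auto.
      * intros w'' k'' H. apply derives_nonterminal_inv in H as (rhs' & k3 & HX' & H' & ->).
        replace (k2 + S k3) with (S (k3 + k2)) by lia. simpl. econstructor; eauto.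
      * eapply derives_nonterminal; eauto.
      * lia.
    + destruct IH as (Y & u & w' & z & c & k' & Hc & Hd' & -> & -> & Hw'); [nia|].
      exists Y, (w1 ++ u), w', z, (S (k1 + c)), k'. repeat split; auto.
      * intros w'' k'' H. rewrite <- app_assoc.
        replace (S (k1 + c) + k'') with (S (k1 + (c + k''))) by lia.
        econstructor; eauto.
      * lia.
      * now rewrite app_assoc.
Qed.

Lemma heavy_child B X w k : 1 <= B -> derives [inl X] w k -> branching * B < length w ->
  exists Y u w' z c k', embeds [inl X] Y u z c /\ 1 <= c /\ derives [inl Y] w' k' /\
    k = c + k' /\ w = u ++ w' ++ z /\ B < length w'.
Proof.
  intros HB H Hl. apply derives_nonterminal_inv in H as (rhs & k1 & HX & H & ->).
  assert (Hrhs := length_rhs_le _ _ HX).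
  destruct (heavy_nonterminal B _ _ _ HB H) as (Y & u & w' & z & c & k' & Hc & Hd & -> & Hw & Hl');
    [nia|].
  exists Y, u, w', z, (S c), k'. repeat split; auto; [|lia].
  intros w'' k'' H'. eapply derives_nonterminal; eauto.
Qed.

Lemma pow_pos m j : 1 <= m -> 1 <= m ^ j.
Proof. intros H. induction j; simpl; nia. Qed.

Lemma derives_window B : 1 <= B -> forall k X w, derives [inl X] w k -> B < length w ->
  exists Y u w' z c k', embeds [inl X] Y u z c /\ derives [inl Y] w' k' /\
    k = c + k' /\ w = u ++ w' ++ z /\ B < length w' /\ length w' <= branching * B.
Proof.
  intros HB k. induction k as [k IH] using (well_founded_induction lt_wf).
  intros X w H Hl. destruct (Nat.le_gt_cases (length w) (branching * B)) as [Hle|Hgt].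
  - exists X, [], w, [], 0, k. repeat split; auto using embeds_refl. now rewrite app_nil_r.
  - destruct (heavy_child B X w k HB H Hgt)
      as (Y & u & w' & z & c & k' & Hc & Hc1 & Hd & -> & -> & Hw').
    destruct (IH k' ltac:(lia) Y w' Hd Hw')
      as (Y2 & u2 & w2 & z2 & c2 & k2 & Hc2 & Hd2 & -> & -> & Hw2 & Hw2').
    exists Y2, (u ++ u2), w2, (z2 ++ z), (c + c2), k2.
    repeat split; [eapply embeds_trans; eauto | exact Hd2 | lia | | exact Hw2 | exact Hw2'].
    now rewrite <- !app_assoc.
Qed.

Definition has_self_embedding (X : nat) (w : list T) (k : nat) : Prop :=
  exists Y a b ca u z c x kx, embeds [inl X] Y a b ca /\ embeds [inl Y] Y u z c /\
    1 <= c /\ derives [inl Y] x kx /\ w = a ++ u ++ x ++ z ++ b /\ k = ca + c + kx.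

Lemma has_self_embedding_embeds X Y u z c w k : embeds [inl X] Y u z c ->
  has_self_embedding Y w k -> has_self_embedding X (u ++ w ++ z) (c + k).
Proof.
  intros H (Y' & a & b & ca & u' & z' & c' & x & kx & Ha & Hu & Hc & Hx & -> & ->).
  exists Y', (u ++ a), (b ++ z), (c + ca), u', z', c', x, kx.
  repeat split; [eapply embeds_trans; eauto | exact Hu | exact Hc | exact Hx | | lia].
  now rewrite <- !app_assoc.
Qed.

Definition occurs_below (Ys : list nat) (X : nat) (w : list T) (k : nat) : Prop :=
  exists Y u x z c kx, In Y Ys /\ embeds [inl X] Y u z c /\ derives [inl Y] x kx /\
    w = u ++ x ++ z /\ k = c + kx.

(* Pigeonhole along a path of heavy children: after [length R] steps some
   nonterminal repeats, either within the path or with one of the ancestors [Ys]. *)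
Lemma self_embedding_or_occurs_below j : forall Ys X w k,
  derives [inl X] w k -> NoDup Ys -> incl Ys (map fst R) ->
  length R <= length Ys + j -> branching ^ j < length w ->
  has_self_embedding X w k \/ occurs_below Ys X w k.
Proof.
  induction j as [|j IH]; intros Ys X w k Hd HN HI HR Hl;
    (destruct (in_dec Nat.eq_dec X Ys) as [HX|HX];
      [right; exists X, [], w, [], 0, k; repeat split; auto using embeds_refl;
       now rewrite app_nil_r|]);
    assert (HXR : In X (map fst R)) by
      (apply derives_nonterminal_inv in Hd as (rhs & _ & HXr & _);
       apply in_map_iff; now exists (X, rhs)).
  - exfalso. assert (Hlen : length (X :: Ys) <= length (map fst R))
      by (apply NoDup_incl_length; [now constructor | now intros y [<- | Hy]; auto]).
    rewrite length_map in Hlen. simpl in Hlen. lia.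
  - assert (Hb : 1 <= branching) by (unfold branching; lia).
    destruct (heavy_child (branching ^ j) X w k (pow_pos _ _ Hb) Hd Hl)
      as (Y & u & w' & z & c & k' & Hc & Hc1 & Hd' & -> & -> & Hw').
    destruct (IH (X :: Ys) Y w' k' Hd')
      as [Hp | (Y' & u' & x & z' & c' & kx & [<- | HY'] & Hc' & Hx & -> & ->)];
      [now constructor | now intros y [<- | Hy]; auto | simpl; lia | exact Hw' | | |].
    + left. eapply has_self_embedding_embeds; eauto.
    + left. exists X, [], [], 0, (u ++ u'), (z' ++ z), (c + c'), x, kx.
      repeat split; [apply embeds_refl | eapply embeds_trans; eauto | lia | exact Hx | | lia].
      simpl. now rewrite <- !app_assoc, app_nil_r.
    + right. exists Y', (u ++ u'), x, (z' ++ z), (c + c'), kx.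
      repeat split; [exact HY' | eapply embeds_trans; eauto | exact Hx | | lia].
      now rewrite <- !app_assoc.
Qed.

(* When the repeated nonterminal derives itself with empty context, the cycle is
   cut out of the derivation and the argument is rerun on a smaller one. *)
Lemma derives_pumping : forall k X w,
  derives [inl X] w k -> branching ^ S (length R) < length w ->
  exists u v x y z, w = u ++ v ++ x ++ y ++ z /\
    length (v ++ x ++ y) <= branching ^ S (length R) /\ v ++ y <> [] /\
    forall i, exists k', derives [inl X] (u ++ lpow v i ++ x ++ lpow y i ++ z) k'.
Proof.
  intros k. induction k as [k IH] using (well_founded_induction lt_wf). intros X w Hd Hl.
  assert (Hb : 1 <= branching) by (unfold branching; lia).
  destruct (derives_window (branching ^ length R) (pow_pos _ _ Hb) k X w Hd)
    as (Y0 & u0 & w' & z0 & c0 & k' & H0 & Hd' & -> & -> & Hw' & Hw''); [simpl in Hl; nia|].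
  destruct (self_embedding_or_occurs_below (length R) [] Y0 w' k' Hd')
    as [(Y & a & b & ca & u & z & c & x & kx & Ha & Hu & Hc & Hx & -> & ->)
       | (? & ? & ? & ? & ? & ? & [] & _)];
    [constructor | intros ? [] | lia | exact Hw' |].
  assert (Hpump : forall i, derives [inl X]
      ((u0 ++ a) ++ lpow u i ++ x ++ lpow z i ++ b ++ z0) (c0 + (ca + (i * c + kx)))).
  { intros i. replace ((u0 ++ a) ++ lpow u i ++ x ++ lpow z i ++ b ++ z0)
      with (u0 ++ (a ++ (lpow u i ++ x ++ lpow z i) ++ b) ++ z0)
      by now rewrite <- !app_assoc.
    now apply H0, Ha, embeds_pump. }
  destruct (u ++ z) as [|l luz] eqn:Huz.
  - apply app_eq_nil in Huz as [-> ->].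
    assert (Hcut : derives [inl X] (u0 ++ (a ++ [] ++ x ++ [] ++ b) ++ z0) (c0 + (ca + kx))).
    { pose proof (Hpump 0) as H. simpl in *. now rewrite <- !app_assoc in *. }
    refine (IH _ _ X _ Hcut Hl). lia.
  - exists (u0 ++ a), u, x, z, (b ++ z0). repeat split.
    + now rewrite <- !app_assoc.
    + rewrite !length_app in *. simpl in *. nia.
    + now rewrite Huz.
    + intros i. eexists. apply Hpump.
Qed.

Lemma cfg_pumping start : exists p, forall w, cfg_generates R start w -> p < length w ->
  exists u v x y z, w = u ++ v ++ x ++ y ++ z /\ length (v ++ x ++ y) <= p /\
    v ++ y <> [] /\ forall i, cfg_generates R start (u ++ lpow v i ++ x ++ lpow y i ++ z).
Proof.
  exists (branching ^ S (length R)). intros w Hw Hl.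
  apply cfg_generates_derives in Hw as [k Hd].
  destruct (derives_pumping k start w Hd Hl) as (u & v & x & y & z & E & Hvxy & Hvy & Hpump).
  exists u, v, x, y, z. repeat split; auto.
  intros i. now apply cfg_generates_derives.
Qed.

End Grammar.

(** * Pumped witnesses are not primitive *)

Lemma divide_fact k d : 1 <= d <= k -> (Z.of_nat d | Z.of_nat (fact k))%Z.
Proof.
  induction k as [|k IH]; intros Hd; [lia|].
  cbn [fact]. rewrite Nat2Z.inj_mul.
  destruct (Nat.eq_dec d (S k)) as [->|Hne].
  - apply Z.divide_mul_l, Z.divide_refl.
  - apply Z.divide_mul_r, IH. lia.
Qed.

(* With [M = (N+1)!] and [n = N+1], pumping [i] times moves the exponent sums
   [(M, M n + 1)] of the witness by [(i-1) (da, db)]: if [da = 0], pumping twice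
   makes [db + 1 <= N + 1] divide both; if [da = 1], pumping [M (m-1) + 1] times
   with [m = M n + 1 - M db] makes [m] divide both. *)
Lemma pumped_exponents_not_coprime N da db :
  (0 <= da <= 1)%Z -> (0 <= db)%Z -> (1 <= da + db <= Z.of_nat N)%Z ->
  exists i d, (2 <= d)%Z /\
    (d | Z.of_nat (fact (S N)) + (Z.of_nat i - 1) * da)%Z /\
    (d | Z.of_nat (fact (S N)) * Z.of_nat (S N) + 1 + (Z.of_nat i - 1) * db)%Z.
Proof.
  intros Hda Hdb Hsum. set (M := Z.of_nat (fact (S N))).
  assert (HM : (1 <= M)%Z) by (pose proof (lt_O_fact (S N)); lia).
  destruct (Z.eq_dec da 0) as [->|Hda1].
  - exists 2, (db + 1)%Z. split; [lia|].
    assert (Hdiv : (db + 1 | M)%Z).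
    { replace (db + 1)%Z with (Z.of_nat (S (Z.to_nat db))) by lia.
      apply divide_fact. lia. }
    split.
    + now rewrite Z.mul_0_r, Z.add_0_r.
    + replace (M * Z.of_nat (S N) + 1 + (Z.of_nat 2 - 1) * db)%Z
        with (M * Z.of_nat (S N) + (db + 1))%Z by lia.
      apply Z.divide_add_r; [apply Z.divide_mul_l|]; auto using Z.divide_refl.
  - assert (da = 1%Z) as -> by lia.
    set (m := (M * Z.of_nat (S N) + 1 - M * db)%Z).
    assert (Hm : (2 <= m)%Z) by (subst m; nia).
    exists (S (Z.to_nat (M * (m - 1)))), m.
    rewrite Nat2Z.inj_succ, Z2Nat.id by nia. split; [exact Hm|]. split.
    + exists M. ring.
    + exists (1 + M * db)%Z. subst m. ring.
Qed.

Theorem mainTheorem13 : ~ context_free P2bar.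
Proof.
  intros (rules & start & HL).
  destruct (cfg_pumping _ rules start) as [N Hpumping].
  set (n := S N); set (M := fact (S N)).
  assert (HM : 1 <= M) by apply lt_O_fact.
  destruct (Hpumping (witness n M)) as (u & v & x & y & z & E & Hvxy & Hvy & Hpump).
  { apply HL, witness_P2bar. }
  { rewrite length_witness. unfold n. nia. }
  destruct (witness_pump_shift n M u v x y z E ltac:(unfold n; lia)) as (Ha & Hb & Hlen).
  destruct (pumped_exponents_not_coprime N (weight ea v + weight ea y) (weight eb v + weight eb y))
    as (i & d & Hd & Hda & Hdb); [exact Ha | exact Hb | |].
  { rewrite Hlen. assert (length (v ++ y) <> 0) by now intros ?%length_zero_iff_nil.
    rewrite !length_app in *. lia. }
  destruct (weight_witness n M) as [Wa Wb].
  destruct (proj2 (HL _) (Hpump i)) as [_ [w Hbasis]].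
  assert (Hd1 : (d | 1)%Z).
  { apply (basis_exponents_coprime _ w d Hbasis); rewrite weight_pumped, <- E.
    - now rewrite Wa.
    - now rewrite Wb. }
  apply Z.divide_pos_le in Hd1; lia.
Qed.
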